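(* Let $m$ and $n$ be positive integers such that $1<m\le n$. Then \[ \sum_{d=1}^n \mu(d)\, 2^{\lfloor\frac{n}{d} \rfloor - \lfloor \frac{n-1}{d} \rfloor + \lfloor\frac{m}{d} \rfloor - \lfloor \frac{m-1}{d} \rfloor} = \begin{cases} M(n) & \text{if } \gcd(m,n) >1, \\ 1 + M(n) & \text{if } \gcd(m,n)=1. \end{cases} \]
   Context: $\mu$ is the Möbius function and $M(n)=\sum_{d=1}^n\mu(d)$ is the Mertens function. $\lfloor x\rfloor$ is the floor of $x$. *)

From mathcomp Require Import all_boot all_order all_algebra.
Set Implicit Arguments. Unset Strict Implicit. Unset Printing Implicit Defensive.
Import Order.TTheory GRing.Theory Num.Theory.
Local Open Scope ring_scope.

Definition mobius (d : nat) : int :=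
  if [forall p : 'I_d.+1, prime p ==> ~~ (p * p %| d)%N]
  then (-1) ^+ size (primes d)
  else 0.

Definition mertens (n : nat) : int := \sum_(1 <= d < n.+1) mobius d.

From mathcomp Require Import all_boot all_order all_algebra.
From mathcomp Require Import zify ring.
Import Order.TTheory GRing.Theory Num.Theory.
Local Open Scope ring_scope.

(* Since [n %/ d - (n - 1) %/ d] is the indicator of [d %| n], the summand is
   [mu d * 2 ^ ([d %| n] + [d %| m])]
   [= mu d * (1 + [d %| n] + [d %| m] + [d %| gcd m n])].
   Summing over [d <= n] gives [M(n)] plus three sums of [mu] over the divisors of
   [n], [m] and [gcd m n]; the first two vanish because [m, n > 1], the last one
   is [1] exactly when [m] and [n] are coprime. *)

Lemma squarefreeP d : (0 < d)%N ->
  reflect (forall q, prime q -> ~~ (q * q %| d)%N)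
          [forall p : 'I_d.+1, prime p ==> ~~ (p * p %| d)%N].
Proof.
move=> d_gt0; apply: (iffP forallP) => [sqf q q_pr | sqf i]; last first.
  by apply/implyP => /sqf.
apply/negP => qq_d; have q_gt1 := prime_gt1 q_pr.
have q_le_d : (q < d.+1)%N by have := dvdn_leq d_gt0 qq_d; nia.
by move: (sqf (Ordinal q_le_d)) => /implyP /(_ q_pr); rewrite qq_d.
Qed.

Lemma mobius_squarefree d : (0 < d)%N -> (forall q, prime q -> ~~ (q * q %| d)%N) ->
  mobius d = (-1) ^+ size (primes d).
Proof. by move=> d_gt0 sqf; rewrite /mobius; case: squarefreeP => // /(_ sqf). Qed.

Lemma mobius1 : mobius 1 = 1.
Proof.
rewrite mobius_squarefree // => q q_pr; rewrite dvdn1 muln_eq1 andbb.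
by rewrite (gtn_eqF (prime_gt1 q_pr)).
Qed.

Lemma mobius_primeM p d : prime p -> (0 < d)%N ->
  mobius (p * d) = if (p %| d)%N then 0 else - mobius d.
Proof.
move=> p_pr d_gt0; have p_gt0 := prime_gt0 p_pr.
have pd_gt0 : (0 < p * d)%N by rewrite muln_gt0 p_gt0.
have [p_d | p_nd] := boolP (p %| d)%N.
  rewrite /mobius; case: squarefreeP => // sqf.
  by move: (sqf p p_pr); rewrite dvdn_pmul2l ?p_d.
have sq_dvd q : prime q -> (q * q %| p * d)%N = (q * q %| d)%N.
  move=> q_pr; have [->|q_neq_p] := eqVneq q p.
    rewrite dvdn_pmul2l // (negbTE p_nd); apply/esym/negP => pp_d.
    by move/negP: p_nd; apply; apply: dvdn_trans _ pp_d; apply: dvdn_mulr.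
  by rewrite Gauss_dvdr // coprimeMl andbb prime_coprime // dvdn_prime2 // q_neq_p.
have size_primes : size (primes (p * d)) = (size (primes d)).+1.
  have p_nin : p \notin primes d by rewrite mem_primes p_pr d_gt0.
  apply: (@perm_size _ _ (p :: primes d)); apply: uniq_perm.
  - exact: primes_uniq.
  - by rewrite /= p_nin primes_uniq.
  by move=> q; rewrite primesM // primes_prime // !inE.
rewrite /mobius; case: squarefreeP => // sqf_pd; case: squarefreeP => // sqf_d.
- by rewrite size_primes exprS mulN1r.
- by case: sqf_d => q q_pr; rewrite -sq_dvd // sqf_pd.
- by case: sqf_pd => q q_pr; rewrite sq_dvd // sqf_d.
Qed.

Lemma divisors_dvd_filter p k : (0 < p)%N -> (p %| k)%N -> (0 < k)%N ->
  perm_eq [seq d <- divisors k | (p %| d)%N] [seq (p * e)%N | e <- divisors (k %/ p)].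
Proof.
move=> p_gt0 p_k k_gt0; have kp_gt0 : (0 < k %/ p)%N by rewrite divn_gt0 // dvdn_leq.
have kE : (p * (k %/ p))%N = k by rewrite mulnC divnK.
apply: uniq_perm; first by rewrite filter_uniq ?divisors_uniq.
  by rewrite map_inj_uniq ?divisors_uniq // => x y /eqP; rewrite eqn_pmul2l // => /eqP.
move=> d; rewrite mem_filter -dvdn_divisors //; apply/andP/mapP => [[p_d d_k] | [e]].
  exists (d %/ p)%N; last by rewrite mulnC divnK.
  by rewrite -dvdn_divisors // -(@dvdn_pmul2l p) // kE mulnC divnK.
by rewrite -dvdn_divisors // => e_kp ->; rewrite dvdn_mulr // -kE dvdn_pmul2l.
Qed.

Lemma divisors_ndvd_filter p k : prime p -> (p %| k)%N -> (0 < k)%N ->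
  perm_eq [seq d <- divisors k | ~~ (p %| d)%N]
          [seq d <- divisors (k %/ p) | ~~ (p %| d)%N].
Proof.
move=> p_pr p_k k_gt0.
have kp_gt0 : (0 < k %/ p)%N by rewrite divn_gt0 ?prime_gt0 // dvdn_leq.
apply: uniq_perm; rewrite ?filter_uniq ?divisors_uniq // => d.
rewrite !mem_filter -!dvdn_divisors //; case p_d: (p %| d)%N => //=.
have d_coprime_p : coprime d p by rewrite coprime_sym prime_coprime // p_d.
by rewrite -{1}(divnK p_k) Gauss_dvdl.
Qed.

Lemma sum_mobius_divisors k : (0 < k)%N ->
  \sum_(d <- divisors k) mobius d = (k == 1)%:R.
Proof.
move=> k_gt0; have [k_lt1 | k_gt1 | ->] := ltngtP k 1.
- by rewrite ltnNge k_gt0 in k_lt1.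
(* With [p] a prime factor of [k], the divisors [p * e] cancel the divisors [e]
   coprime to [p], and [mu (p * e) = 0] when [p %| e]. *)
- have p_pr := pdiv_prime k_gt1; have p_k := pdiv_dvd k; set p := pdiv k in p_pr p_k *.
  have kp_gt0 : (0 < k %/ p)%N by rewrite divn_gt0 ?prime_gt0 // dvdn_leq.
  rewrite (bigID (fun d => p %| d)%N) /= -[X in X + _]big_filter -[X in _ + X]big_filter.
  rewrite (perm_big _ (divisors_dvd_filter _ _ (prime_gt0 p_pr) p_k k_gt0)).
  rewrite (perm_big _ (divisors_ndvd_filter _ _ p_pr p_k k_gt0)) big_map.
  rewrite (bigID (fun e => p %| e)%N) /= big_filter.
  have divisor_gt0 e : e \in divisors (k %/ p) -> (0 < e)%N.
    by rewrite -dvdn_divisors //; apply: dvdn_gt0.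
  rewrite big_seq_cond big1 ?add0r => [|e /andP[/divisor_gt0 e_gt0 p_e]]; last first.
    by rewrite mobius_primeM ?p_e.
  rewrite -big_split big_seq_cond /= big1 // => e /andP[/divisor_gt0 e_gt0 p_e].
  by rewrite mobius_primeM ?(negbTE p_e) ?addNr.
- by rewrite (perm_big [:: 1%N]) ?big_seq1 ?mobius1 //;
    apply: uniq_perm => // d; rewrite -dvdn_divisors // dvdn1 inE.
Qed.

Lemma sum_mobius_dvd N k : (0 < k)%N -> (k <= N)%N ->
  \sum_(1 <= d < N.+1) mobius d * (d %| k)%N%:R = (k == 1)%:R.
Proof.
move=> k_gt0 k_le_N.
have divisorsE : perm_eq [seq d <- index_iota 1 N.+1 | (d %| k)%N] (divisors k).
  apply: uniq_perm; rewrite ?filter_uniq ?iota_uniq ?divisors_uniq // => d.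
  rewrite mem_filter mem_index_iota -dvdn_divisors //.
  case d_k: (d %| k)%N; rewrite ?andbF //=.
  by have := dvdn_leq k_gt0 d_k; have := dvdn_gt0 k_gt0 d_k; lia.
rewrite -sum_mobius_divisors // -(perm_big _ divisorsE) big_filter [RHS]big_mkcond /=.
by apply: eq_bigr => d _; case: (d %| k)%N; rewrite ?mulr1 ?mulr0.
Qed.

Lemma divn_sub_pred n d : (0 < n)%N -> (n %/ d - (n - 1) %/ d)%N = (d %| n)%N :> nat.
Proof.
case: n => // n _; case: d => [|d]; first by rewrite !divn0 dvd0n.
by rewrite divnS // subn1 /= addnK.
Qed.

Lemma exp2_addb (R : comNzRingType) (a b : bool) :
  2 ^+ (a + b)%N = 1 + a%:R + b%:R + (a && b)%:R :> R.
Proof. by case: a; case: b => /=; rewrite ?expr0 ?expr1 ?expr2; ring. Qed.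

Theorem theorem4p1 (m n : nat) (hm : (1 < m)%N) (hmn : (m <= n)%N) :
  \sum_(1 <= d < n.+1)
     mobius d * 2 ^+ ((n %/ d - (n - 1) %/ d) + (m %/ d - (m - 1) %/ d))%N
  = (if (1 < gcdn m n)%N then mertens n else 1 + mertens n).
Proof.
have m_gt0 : (0 < m)%N by lia.
have n_gt1 : (1 < n)%N by lia.
have g_gt0 : (0 < gcdn m n)%N by rewrite gcdn_gt0 m_gt0.
have g_le_n : (gcdn m n <= n)%N by rewrite dvdn_leq ?dvdn_gcdr // ltnW.
rewrite (eq_bigr (fun d => mobius d + mobius d * (d %| n)%N%:R
   + mobius d * (d %| m)%N%:R + mobius d * (d %| gcdn m n)%N%:R)); last first.
  by move=> d _; rewrite !divn_sub_pred ?(ltnW n_gt1) // exp2_addb dvdn_gcd andbC; ring.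
rewrite !big_split /= !sum_mobius_dvd ?(ltnW n_gt1) // -/(mertens n).
rewrite (gtn_eqF hm) (gtn_eqF n_gt1) !addr0.
have [g_gt1 | g_le1] := ltnP 1 (gcdn m n); first by rewrite (gtn_eqF g_gt1) addr0.
have -> : gcdn m n = 1%N by lia.
by rewrite addrC.
Qed.
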